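(* Let $f$ be the linear Anosov diffeomorphism of $\mathbb{T}^2=\mathbb{R}^2/\mathbb{Z}^2$ induced by $L=\begin{pmatrix}a&b\\c&d\end{pmatrix}$ with $a,b,c,d\in\mathbb{Z}$ and $ad-bc=1$ (and $L$ has no eigenvalue on the unit circle). Then: (i) $b$ divides $a-d$ if and only if $f$ is $R$-reversible for $R$ the involution of $\mathbb{T}^2$ induced by a matrix of the form $\begin{pmatrix}1&0\\ \gamma&-1\end{pmatrix}$ with $\gamma\in\mathbb{Z}$ (necessarily $\gamma=\frac{d-a}{b}$), and likewise if and only if $f$ is $R$-reversible for $R$ induced by a matrix $\begin{pmatrix}-1&0\\ \gamma&1\end{pmatrix}$ with $\gamma\in\mathbb{Z}$ (necessarily $\gamma=\frac{a-d}{b}$). (ii) $c$ divides $a-d$ if and only if $f$ is $R$-reversible for $R$ induced by a matrix of the form $\begin{pmatrix}1&\gamma\\ 0&-1\end{pmatrix}$ with $\gamma\in\mathbb{Z}$ (necessarily $\gamma=\frac{d-a}{c}$), and likewise if and only if $f$ is $R$-reversible for $R$ induced by a matrix $\begin{pmatrix}-1&\gamma\\ 0&1\end{pmatrix}$ with $\gamma\in\mathbb{Z}$ (necessarily $\gamma=\frac{a-d}{c}$). (iii) Given $\alpha,\beta\in\mathbb{Z}\setminus\{0\}$ with $1-\alpha^2\neq0$ and $\beta$ dividing $1-\alpha^2$, let $R$ be the involution of $\mathbb{T}^2$ induced by $A=\begin{pmatrix}\alpha&\beta\\ \frac{1-\alpha^2}{\beta}&-\alpha\end{pmatrix}$. Then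 $f$ is $R$-reversible if and only if $(x,y)=(2b\alpha+(d-a)\beta,\ \beta)$ is a solution of the generalized Pell equation $x^2-Dy^2=N$, where $D=(a+d)^2-4$ and $N=4b^2$.
   Context: A diffeomorphism of $\mathbb{T}^2$ is induced by an integer matrix $M$ with $\det M=\pm1$ if it is the map $\pi(v)\mapsto\pi(Mv)$, where $\pi:\mathbb{R}^2\to\mathbb{R}^2/\mathbb{Z}^2$ is the projection. A linear Anosov diffeomorphism is one induced by such a matrix with no eigenvalue of modulus one. For an involution $R$ ($R\circ R=\mathrm{Id}$), $f$ is $R$-reversible if $R\circ f=f^{-1}\circ R$. *)

From Stdlib Require Import Reals ZArith Lra.
From Coquelicot Require Import Coquelicot.
Open Scope R_scope.

Record zmat2 := Zmat2 { m11 : Z; m12 : Z; m21 : Z; m22 : Z }.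

Definition zdet (M : zmat2) : Z := (m11 M * m22 M - m12 M * m21 M)%Z.

Definition mapR2 (M : zmat2) (p : R * R) : R * R :=
  (IZR (m11 M) * fst p + IZR (m12 M) * snd p,
   IZR (m21 M) * fst p + IZR (m22 M) * snd p).

(** The torus R^2/Z^2, represented by the fundamental domain [0,1)^2. *)
Definition T2 : Type := { p : R * R | (0 <= fst p < 1) /\ (0 <= snd p < 1) }.

Lemma frac_part_range (x : R) : 0 <= frac_part x < 1.
Proof. destruct (base_fp x); split; lra. Qed.

Definition piT (v : R * R) : T2 :=
  exist _ (frac_part (fst v), frac_part (snd v))
        (conj (frac_part_range (fst v)) (frac_part_range (snd v))).

Definition induced (M : zmat2) : T2 -> T2 :=
  fun x => piT (mapR2 M (proj1_sig x)).

Definition eigenvalue (M : zmat2) (l : C) : Prop :=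
  exists v1 v2 : C, (v1 <> 0%C \/ v2 <> 0%C) /\
    Cplus (Cmult (RtoC (IZR (m11 M))) v1) (Cmult (RtoC (IZR (m12 M))) v2) = Cmult l v1 /\
    Cplus (Cmult (RtoC (IZR (m21 M))) v1) (Cmult (RtoC (IZR (m22 M))) v2) = Cmult l v2.

Definition linear_anosov_matrix (M : zmat2) : Prop :=
  (zdet M = 1%Z \/ zdet M = (-1)%Z) /\ forall l : C, eigenvalue M l -> Cmod l <> 1.

Definition involution {X : Type} (Rm : X -> X) : Prop := forall x, Rm (Rm x) = x.

Definition reversible {X : Type} (Rm f : X -> X) : Prop :=
  involution Rm /\
  exists g : X -> X,
    (forall x, g (f x) = x) /\ (forall x, f (g x) = x) /\
    (forall x, Rm (f x) = g (Rm x)).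

(* The map M |-> induced M is multiplicative and injective on integer matrices, so
   for an integer involution A the reversibility A o f o A = f^-1 holds on the torus
   iff it holds for the matrices, i.e. A L = adj(L) A.  When tr A = 0 this matrix
   identity reduces to the single equation tr(AL) = 0.  For the triangular
   involutions of (i) and (ii) this is the linear equation between g and a - d;
   for the involution of (iii) the Pell residue x^2 - D y^2 - N equals
   -4 b beta tr(AL), and b <> 0 because an Anosov matrix has no invariant
   coordinate axis. *)
From Stdlib Require Import Reals ZArith.
From Coquelicot Require Import Coquelicot.
From Stdlib Require Import Lra Lia ProofIrrelevance.

Open Scope R_scope.

Definition zint (x : R) : Prop := exists n : Z, x = IZR n.

Lemma frac_part_add_IZR (x : R) (n : Z) : frac_part (x + IZR n) = frac_part x.
Proof.
  symmetry; apply (Int_part_frac_part_spec _ (Int_part x + n)).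
  - destruct (base_fp x); lra.
  - rewrite plus_IZR; unfold frac_part; ring.
Qed.

Lemma frac_part_id (x : R) : 0 <= x < 1 -> frac_part x = x.
Proof.
  intros Hx; symmetry; apply (Int_part_frac_part_spec _ 0); [exact Hx | simpl; ring].
Qed.

Lemma T2_eq (x y : T2) : proj1_sig x = proj1_sig y -> x = y.
Proof. apply eq_sig_hprop; intros; apply proof_irrelevance. Qed.

Lemma piT_proj1_sig (x : T2) : piT (proj1_sig x) = x.
Proof.
  apply T2_eq; destruct x as [[x1 x2] [h1 h2]]; simpl.
  now rewrite !frac_part_id.
Qed.

Lemma piT_eq_iff (v w : R * R) :
  piT v = piT w <-> zint (fst v - fst w) /\ zint (snd v - snd w).
Proof.
  split.
  - intros E.
    assert (E1 := f_equal (fun z => fst (proj1_sig z)) E).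
    assert (E2 := f_equal (fun z => snd (proj1_sig z)) E).
    simpl in E1, E2; unfold frac_part in E1, E2; split.
    + exists (Int_part (fst v) - Int_part (fst w))%Z; rewrite minus_IZR; lra.
    + exists (Int_part (snd v) - Int_part (snd w))%Z; rewrite minus_IZR; lra.
  - intros [[n1 E1] [n2 E2]]; apply T2_eq; simpl.
    replace (fst v) with (fst w + IZR n1) by lra.
    replace (snd v) with (snd w + IZR n2) by lra.
    now rewrite !frac_part_add_IZR.
Qed.

Lemma induced_piT (M : zmat2) (v : R * R) : induced M (piT v) = piT (mapR2 M v).
Proof.
  destruct v as [v1 v2]; apply piT_eq_iff; simpl; unfold frac_part; split.
  - exists (- (m11 M * Int_part v1 + m12 M * Int_part v2))%Z.
    rewrite opp_IZR, plus_IZR, !mult_IZR; ring.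
  - exists (- (m21 M * Int_part v1 + m22 M * Int_part v2))%Z.
    rewrite opp_IZR, plus_IZR, !mult_IZR; ring.
Qed.

Definition zmul (M N : zmat2) : zmat2 :=
  Zmat2 (m11 M * m11 N + m12 M * m21 N)%Z (m11 M * m12 N + m12 M * m22 N)%Z
        (m21 M * m11 N + m22 M * m21 N)%Z (m21 M * m12 N + m22 M * m22 N)%Z.

Definition zid : zmat2 := Zmat2 1 0 0 1.

Definition ztrace (M : zmat2) : Z := (m11 M + m22 M)%Z.

Definition zadj (M : zmat2) : zmat2 := Zmat2 (m22 M) (- m12 M) (- m21 M) (m11 M).

Lemma mapR2_zmul (M N : zmat2) (v : R * R) :
  mapR2 (zmul M N) v = mapR2 M (mapR2 N v).
Proof. unfold mapR2, zmul; simpl; rewrite !plus_IZR, !mult_IZR; f_equal; ring. Qed.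

Lemma induced_comp (M N : zmat2) (x : T2) :
  induced (zmul M N) x = induced M (induced N x).
Proof.
  unfold induced at 3; rewrite induced_piT, <- mapR2_zmul; reflexivity.
Qed.

Lemma induced_zid (x : T2) : induced zid x = x.
Proof.
  unfold induced; rewrite <- (piT_proj1_sig x) at 2; f_equal.
  destruct (proj1_sig x) as [v1 v2]; unfold mapR2; simpl; f_equal; ring.
Qed.

Lemma zint_scale_all_eq0 (k : Z) : (forall t, zint (IZR k * t)) -> k = 0%Z.
Proof.
  intros H; destruct (Z.eq_dec k 0) as [|Hk]; [assumption|].
  destruct (H (/ (2 * IZR k))) as [n Hn].
  assert (IZR k <> 0) by now apply not_0_IZR.
  assert (Hhalf : 1 = IZR (2 * n)) by (rewrite mult_IZR, <- Hn; field; assumption).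
  apply eq_IZR in Hhalf; lia.
Qed.

Lemma induced_inj (M N : zmat2) : (forall x, induced M x = induced N x) -> M = N.
Proof.
  intros H.
  assert (col1 : forall t, zint (IZR (m11 M - m11 N) * t) /\ zint (IZR (m21 M - m21 N) * t)).
  { intros t; specialize (H (piT (t, 0))); rewrite !induced_piT, piT_eq_iff in H.
    simpl in H; rewrite !minus_IZR.
    destruct H as [[n1 E1] [n2 E2]]; split; [exists n1 | exists n2]; lra. }
  assert (col2 : forall t, zint (IZR (m12 M - m12 N) * t) /\ zint (IZR (m22 M - m22 N) * t)).
  { intros t; specialize (H (piT (0, t))); rewrite !induced_piT, piT_eq_iff in H.
    simpl in H; rewrite !minus_IZR.
    destruct H as [[n1 E1] [n2 E2]]; split; [exists n1 | exists n2]; lra. }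
  assert (E11 := zint_scale_all_eq0 _ (fun t => proj1 (col1 t))).
  assert (E21 := zint_scale_all_eq0 _ (fun t => proj2 (col1 t))).
  assert (E12 := zint_scale_all_eq0 _ (fun t => proj1 (col2 t))).
  assert (E22 := zint_scale_all_eq0 _ (fun t => proj2 (col2 t))).
  destruct M, N; simpl in *; f_equal; lia.
Qed.

Lemma reversible_induced_iff (A L Li : zmat2) :
  zmul A A = zid -> zmul L Li = zid -> zmul Li L = zid ->
  reversible (induced A) (induced L) <-> zmul A L = zmul Li A.
Proof.
  intros HAA HLLi HLiL; split.
  - intros [_ [g [gf [_ Hrev]]]].
    assert (g_inv : forall y, g y = induced Li y).
    { intros y; rewrite <- (gf (induced Li y)), <- induced_comp, HLLi, induced_zid.
      reflexivity. }
    apply induced_inj; intros x.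
    now rewrite !induced_comp, Hrev, g_inv.
  - intros E; split.
    + intros x; now rewrite <- induced_comp, HAA, induced_zid.
    + exists (induced Li); split; [|split]; intros x.
      * now rewrite <- induced_comp, HLiL, induced_zid.
      * now rewrite <- induced_comp, HLLi, induced_zid.
      * now rewrite <- !induced_comp, E.
Qed.

Lemma zmul_zadj_r (M : zmat2) : zdet M = 1%Z -> zmul M (zadj M) = zid.
Proof. destruct M; unfold zdet, zmul, zadj, zid; simpl; intros; f_equal; lia. Qed.

Lemma zmul_zadj_l (M : zmat2) : zdet M = 1%Z -> zmul (zadj M) M = zid.
Proof. destruct M; unfold zdet, zmul, zadj, zid; simpl; intros; f_equal; lia. Qed.

(* Cayley-Hamilton: A^2 = tr(A) A - det(A) I. *)
Lemma zmul_sq_zid (A : zmat2) : zdet A = (-1)%Z -> ztrace A = 0%Z -> zmul A A = zid.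
Proof.
  destruct A as [p q r s]; unfold zdet, ztrace, zmul, zid; simpl; intros Hd Ht.
  replace s with (- p)%Z in * by lia; f_equal; lia.
Qed.

Lemma zmul_zadj_comm_iff (A L : zmat2) :
  ztrace A = 0%Z -> zmul A L = zmul (zadj L) A <-> ztrace (zmul A L) = 0%Z.
Proof.
  destruct A as [p q r s], L as [a b c d]; unfold ztrace, zmul, zadj; simpl; intros Ht.
  replace s with (- p)%Z by lia; split.
  - intros E; injection E; lia.
  - intros E; f_equal; lia.
Qed.

Lemma reversible_induced_iff_trace (A L : zmat2) :
  zdet L = 1%Z -> zdet A = (-1)%Z -> ztrace A = 0%Z ->
  reversible (induced A) (induced L) <-> ztrace (zmul A L) = 0%Z.
Proof.
  intros HL HdA HtA.
  rewrite (reversible_induced_iff A L (zadj L)) by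
    (apply zmul_sq_zid || apply zmul_zadj_r || apply zmul_zadj_l; assumption).
  now apply zmul_zadj_comm_iff.
Qed.

Lemma anosov_m12_neq0 (L : zmat2) : linear_anosov_matrix L -> m12 L <> 0%Z.
Proof.
  destruct L as [a b c d]; intros [Hdet Han] Hb; simpl in Hb; subst b.
  unfold zdet in Hdet; simpl in Hdet.
  assert (Hd : Z.abs d = 1%Z).
  { apply (Z.eq_mul_1_nonneg' (Z.abs a)); [lia|].
    rewrite <- Z.abs_mul; lia. }
  apply (Han (RtoC (IZR d))).
  - exists (RtoC 0), (RtoC 1); split.
    + right; intros E; injection E; lra.
    + simpl; split; apply injective_projections; simpl; ring.
  - now rewrite Cmod_R, <- abs_IZR, Hd.
Qed.

Lemma Zdivide_sub_comm (n a d : Z) : (n | a - d)%Z <-> (n | d - a)%Z.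
Proof. rewrite <- Z.divide_opp_r; now replace (- (a - d))%Z with (d - a)%Z by ring. Qed.

Lemma divide_iff_exists_solution (P : Z -> Prop) (b e : Z) :
  (forall g, P g <-> (g * b = e)%Z) ->
  ((b | e)%Z <-> exists g, P g) /\ (forall g, P g -> (g * b = e)%Z).
Proof.
  intros HP; split; [split|].
  - intros [g Hg]; exists g; apply HP; lia.
  - intros [g Hg]; exists g; apply HP in Hg; lia.
  - intros g; apply HP.
Qed.

Lemma pell_residue (a b c d al be k : Z) :
  (a * d - b * c = 1)%Z -> (k * be = 1 - al ^ 2)%Z ->
  ((2 * b * al + (d - a) * be) ^ 2 - ((a + d) ^ 2 - 4) * be ^ 2 - 4 * b ^ 2
   = -4 * b * be * (al * a + be * c + k * b - al * d))%Z.
Proof.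
  intros Hdet Hk.
  transitivity (-4 * b * be * (al * a + be * c + k * b - al * d)
                - 4 * be ^ 2 * (a * d - b * c - 1) + 4 * b ^ 2 * (k * be - (1 - al ^ 2)))%Z;
    [ring | rewrite Hdet, Hk; ring].
Qed.

Lemma pell_iff_trace (a b c d al be k : Z) :
  (a * d - b * c = 1)%Z -> (k * be = 1 - al ^ 2)%Z -> b <> 0%Z -> be <> 0%Z ->
  ((2 * b * al + (d - a) * be) ^ 2 - ((a + d) ^ 2 - 4) * be ^ 2 = 4 * b ^ 2)%Z <->
  (al * a + be * c + k * b - al * d = 0)%Z.
Proof.
  intros Hdet Hk Hb Hbe.
  pose proof (pell_residue a b c d al be k Hdet Hk) as Hres.
  split; intros H.
  - assert (Hz : (-4 * b * be * (al * a + be * c + k * b - al * d) = 0)%Z) by lia.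
    apply Z.mul_eq_0 in Hz as [Hz|]; [|assumption].
    apply Z.mul_eq_0 in Hz as [Hz|]; [|contradiction]; lia.
  - rewrite H, Z.mul_0_r in Hres; lia.
Qed.

Ltac mat_lia := unfold zdet, ztrace, zmul; cbn [m11 m12 m21 m22]; lia.

Theorem theoremA (a b c d : Z)
  (hdet : (a * d - b * c)%Z = 1%Z)
  (hanosov : linear_anosov_matrix (Zmat2 a b c d)) :
  let f := induced (Zmat2 a b c d) in
  (* (i) *)
  (((b | a - d)%Z <->
      exists g : Z, reversible (induced (Zmat2 1 0 g (-1))) f) /\
   (forall g : Z, reversible (induced (Zmat2 1 0 g (-1))) f -> (g * b = d - a)%Z) /\
   ((b | a - d)%Z <->
      exists g : Z, reversible (induced (Zmat2 (-1) 0 g 1)) f) /\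
   (forall g : Z, reversible (induced (Zmat2 (-1) 0 g 1)) f -> (g * b = a - d)%Z)) /\
  (* (ii) *)
  (((c | a - d)%Z <->
      exists g : Z, reversible (induced (Zmat2 1 g 0 (-1))) f) /\
   (forall g : Z, reversible (induced (Zmat2 1 g 0 (-1))) f -> (g * c = d - a)%Z) /\
   ((c | a - d)%Z <->
      exists g : Z, reversible (induced (Zmat2 (-1) g 0 1)) f) /\
   (forall g : Z, reversible (induced (Zmat2 (-1) g 0 1)) f -> (g * c = a - d)%Z)) /\
  (* (iii) *)
  (forall alpha beta : Z,
     alpha <> 0%Z -> beta <> 0%Z -> (1 - alpha ^ 2)%Z <> 0%Z ->
     (beta | 1 - alpha ^ 2)%Z ->
     (reversible
        (induced (Zmat2 alpha beta ((1 - alpha ^ 2) / beta) (- alpha))) f <->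
      let x := (2 * b * alpha + (d - a) * beta)%Z in
      let y := beta in
      let D := ((a + d) ^ 2 - 4)%Z in
      let N := (4 * b ^ 2)%Z in
      (x ^ 2 - D * y ^ 2 = N)%Z)).
Proof.
  intros f.
  pose proof (fun A => reversible_induced_iff_trace A (Zmat2 a b c d) hdet) as rev_trace.
  assert (rev_lower : forall g, reversible (induced (Zmat2 1 0 g (-1))) f <-> (g * b = d - a)%Z)
    by (intros g; unfold f; rewrite rev_trace by mat_lia; mat_lia).
  assert (rev_lower' : forall g, reversible (induced (Zmat2 (-1) 0 g 1)) f <-> (g * b = a - d)%Z)
    by (intros g; unfold f; rewrite rev_trace by mat_lia; mat_lia).
  assert (rev_upper : forall g, reversible (induced (Zmat2 1 g 0 (-1))) f <-> (g * c = d - a)%Z)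
    by (intros g; unfold f; rewrite rev_trace by mat_lia; mat_lia).
  assert (rev_upper' : forall g, reversible (induced (Zmat2 (-1) g 0 1)) f <-> (g * c = a - d)%Z)
    by (intros g; unfold f; rewrite rev_trace by mat_lia; mat_lia).
  apply divide_iff_exists_solution in rev_lower, rev_lower', rev_upper, rev_upper'.
  rewrite <- Zdivide_sub_comm in rev_lower, rev_upper.
  split; [tauto | split; [tauto|]].
  intros al be _ Hbe _ [k Hk]; cbv zeta.
  rewrite Hk, Z.div_mul by exact Hbe.
  unfold f; rewrite rev_trace by mat_lia.
  rewrite (pell_iff_trace a b c d al be k) by (lia || exact (anosov_m12_neq0 _ hanosov)).
  mat_lia.
Qed.
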